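(* Let $q$ be a prime power and let $d,\tau,n,m$ be integers with $\lfloor (d-1)/2\rfloor\le\tau<d\le n\le m$. Let $\mathcal C\subseteq\mathbb F_{q^m}^n$ be any (not necessarily linear) code with minimum rank distance $d$. Then $$\ell=\max_{\mathbf r\in\mathbb F_{q^m}^n}|\mathcal C\cap\mathcal B_\tau(\mathbf r)|\ \le\ 1+\sum_{t=\lfloor (d-1)/2\rfloor+1}^{\tau}\frac{\binom{n}{2t+1-d}_q}{\binom{t}{2t+1-d}_q}\ \le\ 1+4\sum_{t=\lfloor (d-1)/2\rfloor+1}^{\tau}q^{(2t-d+1)(n-t)}$$ $$\le\ 1+4\Big(\tau-\big\lfloor\tfrac{d-1}{2}\big\rfloor\Big)\,q^{(2\tau-d+1)(n-\lfloor (d-1)/2\rfloor-1)}.$$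
   Context: Fixing a basis of $\mathbb F_{q^m}$ over $\mathbb F_q$, each vector $\mathbf x\in\mathbb F_{q^m}^n$ is identified with an $m\times n$ matrix over $\mathbb F_q$; $\mathrm{rk}(\mathbf x)$ is the rank of this matrix and the rank distance is $\mathrm{rk}(\mathbf x-\mathbf y)$. The minimum rank distance of $\mathcal C$ is $\min\{\mathrm{rk}(\mathbf c_1-\mathbf c_2):\mathbf c_1\ne\mathbf c_2\in\mathcal C\}$. $\mathcal B_\tau(\mathbf r)=\{\mathbf x:\mathrm{rk}(\mathbf x-\mathbf r)\le\tau\}$. The Gaussian binomial is $\binom{n}{r}_q=\prod_{i=0}^{r-1}\frac{q^n-q^i}{q^r-q^i}$. *)

From HB Require Import structures.
From mathcomp Require Import all_boot all_order all_algebra all_field.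
From mathcomp Require Import finmap.
Set Implicit Arguments. Unset Strict Implicit. Unset Printing Implicit Defensive.
Import Order.TTheory GRing.Theory Num.Theory.
Local Open Scope ring_scope.

(* F plays the role of F_q, L the role of F_{q^m} (an extension of F of
   degree \dim {:L}). *)
Definition coord_mx (F : finFieldType) (L : fieldExtType F) (n : nat)
    (x : 'rV[L]_n) : 'M[F]_(\dim {:L}%VS, n) :=
  \matrix_(i < \dim {:L}%VS, j < n) coord (vbasis {:L}%VS) i (x ord0 j).

Definition rk (F : finFieldType) (L : fieldExtType F) (n : nat)
    (x : 'rV[L]_n) : nat := \rank (coord_mx x).

Definition min_rank_dist (F : finFieldType) (L : fieldExtType F) (n : nat)
    (C : {fset 'rV[L]_n}) (d : nat) : Prop :=
  (forall c1 c2, c1 \in C -> c2 \in C -> c1 != c2 -> (d <= rk (c1 - c2))%N) /\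
  (exists c1 c2, [/\ c1 \in C, c2 \in C, c1 != c2 & rk (c1 - c2) = d]).

Definition code_ball (F : finFieldType) (L : fieldExtType F) (n : nat)
    (C : {fset 'rV[L]_n}) (tau : nat) (r : 'rV[L]_n) : {fset 'rV[L]_n} :=
  [fset c in C | (rk (c - r) <= tau)%N]%fset.

Definition gbin (q n r : nat) : rat :=
  \prod_(i < r) (((q ^ n)%:R - (q ^ i)%:R) / ((q ^ r)%:R - (q ^ i)%:R)).

From HB Require Import structures.
From mathcomp Require Import all_boot all_order all_algebra all_field.
From mathcomp Require Import finmap.
From mathcomp Require Import ring lra zify.

Set Implicit Arguments.
Unset Strict Implicit.
Unset Printing Implicit Defensive.

Import Order.TTheory GRing.Theory Num.Theory.
Local Open Scope ring_scope.

(* For a codeword c with rk (c - r) = t, the row space V_c of the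
   coordinate matrix of c - r is a t-dimensional subspace of F^n.  Since
   rk (c1 - c2) <= dim (V_c1 + V_c2) = 2t - dim (V_c1 :&: V_c2), the row spaces
   of distinct such codewords meet in dimension at most 2t - d, so a frame of
   k = 2t + 1 - d independent vectors of F^n lies in at most one V_c.  Counting
   frames bounds the number of such codewords by
   prod (q^n - q^i) / prod (q^t - q^i) = [n k]_q / [t k]_q, and by the
   triangle inequality at most one codeword lies within distance (d-1)/2 of r.
   The cruder bounds follow from q^(tk) <= 4 prod_(i < k) (q^t - q^i). *)

Lemma one_sub_sum_le_prod (R : realDomainType) k (x : nat -> R) :
    (forall i, (i < k)%N -> 0 <= x i <= 1) ->
  1 - \sum_(i < k) x i <= \prod_(i < k) (1 - x i).
Proof.
elim: k => [|k IHk] x01; first by rewrite !big_ord0; lra.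
have x01' i : (i < k)%N -> 0 <= x i <= 1 by move=> lt_ik; apply: x01; lia.
have prod_ge0 : 0 <= \prod_(i < k) (1 - x i).
  by apply: prodr_ge0 => i _; have := x01' i (ltn_ord i); lra.
have sum_ge0 : 0 <= \sum_(i < k) x i.
  by apply: sumr_ge0 => i _; have := x01' i (ltn_ord i); lra.
rewrite !big_ord_recr /=; have := IHk x01'; have := x01 k (ltnSn k); nra.
Qed.

Section FrameProducts.
Variables (R : realFieldType) (Q : R).
Hypothesis Q_ge2 : 2 <= Q.

Let Q_gt1 : 1 < Q. Proof. by apply: lt_le_trans Q_ge2; rewrite ltr1n. Qed.
Let Q_gt0 : 0 < Q. Proof. exact: lt_trans Q_gt1. Qed.

Lemma sum_expr_le j : \sum_(i < j) Q ^+ i <= Q ^+ j.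
Proof.
elim: j => [|j IHj]; first by rewrite big_ord0 expr0.
rewrite big_ord_recr /= exprSr; have := exprn_ge0 j (ltW Q_gt0); have := Q_ge2; nra.
Qed.

Lemma prod_frames_gt0 t k : (k <= t)%N -> 0 < \prod_(i < k) (Q ^+ t - Q ^+ i).
Proof.
move=> le_kt; apply: prodr_gt0 => i _; rewrite subr_gt0 ltr_eXn2l //.
exact: leq_trans (ltn_ord i) le_kt.
Qed.

Lemma prod_frames_le n k : (k <= n)%N ->
  \prod_(i < k) (Q ^+ n - Q ^+ i) <= Q ^+ (n * k).
Proof.
move=> le_kn.
have -> : Q ^+ (n * k) = \prod_(i < k) Q ^+ n by rewrite prodr_const card_ord exprM.
apply: ler_prod => i _; have := exprn_ge0 i (ltW Q_gt0).
have : Q ^+ i <= Q ^+ n by rewrite ler_eXn2l //; have := ltn_ord i; lia.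
lra.
Qed.

(* For k = t this is the bound prod_{i < t} (1 - Q^(i - t)) >= 1/4: the last
   factor is at least 1/2, and the others together at least 1/2. *)
Lemma prod_frames_ge t k : (k <= t)%N ->
  Q ^+ (t * k) <= 4 * \prod_(i < k) (Q ^+ t - Q ^+ i).
Proof.
case: k => [|k] lt_kt; first by rewrite muln0 expr0 big_ord0; lra.
have Qt_gt0 : 0 < Q ^+ t by rewrite exprn_gt0.
pose x i := Q ^+ i / Q ^+ t.
have factorE i : Q ^+ t - Q ^+ i = Q ^+ t * (1 - x i) by rewrite /x; field; lra.
under eq_bigr do rewrite factorE.
rewrite big_split /= prodr_const card_ord -exprM big_ord_recr /=.
have Qk2 : 2 * Q ^+ k <= Q ^+ t.
  have : Q ^+ k.+1 <= Q ^+ t by rewrite ler_eXn2l.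
  by rewrite exprS; have := exprn_ge0 k (ltW Q_gt0); have := Q_ge2; nra.
have x_k : x k <= 1/2 by rewrite ler_pdivrMr //; lra.
have sum_x : \sum_(i < k) x i <= 1/2.
  by rewrite -mulr_suml ler_pdivrMr //; have := sum_expr_le k; lra.
have x01 i : (i < k)%N -> 0 <= x i <= 1.
  move=> lt_ik; rewrite divr_ge0 ?exprn_ge0 ?(ltW Q_gt0) //= ler_pdivrMr // mul1r.
  by rewrite ler_eXn2l //; lia.
have := one_sub_sum_le_prod x01; set P := \prod_(i < k) _ => P_ge.
have prod_ge : 1/4 <= P * (1 - x k) by nra.
have : 0 < Q ^+ (t * k.+1) by rewrite exprn_gt0.
nra.
Qed.

End FrameProducts.

Lemma gbinE q n k : gbin q n k =
  \prod_(i < k) ((q%:R ^+ n - q%:R ^+ i) / (q%:R ^+ k - q%:R ^+ i)).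
Proof. by apply: eq_bigr => i _; rewrite !natrX. Qed.

Lemma natr_prod_frames (R : pzRingType) q N k : (0 < q)%N -> (k <= N)%N ->
  ((\prod_(i < k) (q ^ N - q ^ i))%N)%:R = \prod_(i < k) (q%:R ^+ N - q%:R ^+ i) :> R.
Proof.
move=> q_gt0 le_kN; rewrite natr_prod; apply: eq_bigr => i _.
by rewrite natrB ?natrX // leq_pexp2l //; apply: leq_trans (ltnW (ltn_ord i)) le_kN.
Qed.

Section GaussianBinomialRatio.
Variables (q n t k : nat).
Hypotheses (q_ge2 : (2 <= q)%N) (le_kt : (k <= t)%N) (le_tn : (t <= n)%N).

Let Q_ge2 : 2 <= q%:R :> rat. Proof. by rewrite ler_nat. Qed.

Lemma gbin_ratioE : gbin q n k / gbin q t k =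
  \prod_(i < k) (q%:R ^+ n - q%:R ^+ i) / \prod_(i < k) (q%:R ^+ t - q%:R ^+ i).
Proof.
rewrite !gbinE !prodf_div.
have := prod_frames_gt0 Q_ge2 (leqnn k); have := prod_frames_gt0 Q_ge2 le_kt.
by move=> ? ?; field; apply/andP; split; rewrite gt_eqF.
Qed.

Lemma gbin_ratio_le : gbin q n k / gbin q t k <= 4 * (q ^ (k * (n - t)))%:R.
Proof.
rewrite gbin_ratioE ler_pdivrMr ?prod_frames_gt0 // natrX.
have le_kn : (k <= n)%N by apply: leq_trans le_tn.
apply: le_trans (prod_frames_le Q_ge2 le_kn) _.
have -> : (n * k = k * (n - t) + t * k)%N by nia.
rewrite exprD -mulrA mulrCA.
by rewrite ler_pM2l ?prod_frames_ge // exprn_gt0 // (lt_le_trans _ Q_ge2).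
Qed.

End GaussianBinomialRatio.

Section Frames.
Variable F : finFieldType.

Lemma card_row_space p n (U : 'M[F]_(p, n)) :
  #|[set v : 'rV[F]_n | (v <= U)%MS]| = (#|F| ^ \rank U)%N.
Proof.
have -> : [set v : 'rV[F]_n | (v <= U)%MS] = [set w *m row_base U | w in 'rV_(\rank U)].
  apply/setP => v; rewrite inE -(eq_row_base U).
  by apply/submxP/imsetP => [[w ->] | [w _ ->]]; exists w.
rewrite card_imset; last exact/row_free_inj/row_base_free.
by rewrite card_mx mul1n.
Qed.

Lemma row_free_col_mx m n (v : 'rV[F]_n) (A : 'M_(m, n)) :
  row_free A -> row_free (col_mx v A) = ~~ (v <= A)%MS.
Proof.
move=> freeA; rewrite /row_free eqn_leq rank_leq_row /=.
rewrite -(leq_add2r (\rank (v :&: A)%MS)) -addsmxE mxrank_sum_cap (eqnP freeA).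
have -> : (v <= A)%MS = (v <= v :&: A)%MS by rewrite sub_capmx submx_refl.
rewrite -(ltn_leqif (mxrank_leqif_sup (capmxSl v A))).
by have := rank_leq_row v; case: ltnP; lia.
Qed.

Definition frames k p n (U : 'M[F]_(p, n)) :=
  [set X : 'M[F]_(k, n) | row_free X && (X <= U)%MS].

Lemma card_frames k p n (U : 'M[F]_(p, n)) : (k <= \rank U)%N ->
  #|frames k U| = (\prod_(i < k) (#|F| ^ \rank U - #|F| ^ i))%N.
Proof.
elim: k => [|k IHk] le_kU.
  rewrite big_ord0 (@eq_card1 _ (0 : 'M_(0, n))) // => X.
  by rewrite !inE flatmx0 eqxx /row_free mxrank0 sub0mx.
rewrite big_ord_recr /= -IHk ?(ltnW le_kU) // -sum_nat_const -sum1_card.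
rewrite (partition_big (@dsubmx F 1 k n) (mem (frames k U))) /= => [|X]; last first.
  rewrite !inE -{1 2}(vsubmxK X); move: {X}(_ X) (_ X) => Xd Xu.
  rewrite (col_mx_sub Xu Xd U) => /andP[freeX /andP[_ ->]].
  rewrite andbT; have rkX : \rank (Xu + Xd)%MS = k.+1 by rewrite addsmxE; apply/eqP.
  have [le_rk _] := mxrank_adds_leqif Xu Xd.
  have := rank_leq_row Xu; have := rank_leq_row Xd.
  by rewrite rkX in le_rk; move=> *; apply/eqP; lia.
apply: eq_bigr => A; rewrite inE => /andP[freeA AU].
rewrite (reindex (col_mx^~ A)) /=; last first.
  exists usubmx => [v _ | X]; first by rewrite col_mxKu.
  by case/andP=> _ /eqP <-; rewrite vsubmxK.
transitivity #|[set v : 'rV[F]_n | (v <= U)%MS] :\: [set v | (v <= A)%MS]|.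
  rewrite -sum1_card; apply: eq_bigl => v.
  by rewrite /frames !inE col_mxKd eqxx andbT (col_mx_sub v A U) AU andbT row_free_col_mx.
rewrite cardsD (setIidPr _); last by apply/subsetP => v; rewrite !inE => /submx_trans->.
by rewrite !card_row_space (eqnP freeA).
Qed.

Lemma frame_packing (I : eqType) (s : seq I) p n (U : I -> 'M[F]_(p, n)) t k :
    uniq s -> {in s, forall i, \rank (U i) = t} ->
    {in s &, forall i j, i != j -> (\rank (U i :&: U j)%MS < k)%N} ->
    (k <= t)%N -> (t <= n)%N ->
  (size s * \prod_(i < k) (#|F| ^ t - #|F| ^ i) <=
   \prod_(i < k) (#|F| ^ n - #|F| ^ i))%N.
Proof.
move=> uniq_s rkU capU le_kt le_tn.
have in_one_frames X :
    (count (fun i => X \in frames k (U i)) s <= (X \in frames k 1%:M))%N.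
  rewrite -size_filter; case r_i: (filter _ s) => [//|i r]; rewrite -r_i.
  have : i \in filter (fun i => X \in frames k (U i)) s by rewrite r_i mem_head.
  rewrite mem_filter => /andP[Xi si].
  have -> : X \in frames k 1%:M by move: Xi; rewrite !inE submx1 => /andP[->].
  apply: (@uniq_leq_size _ _ [:: i]); first exact: filter_uniq.
  move=> j; rewrite mem_filter inE => /andP[Xj sj]; apply/contraT => ne_ji.
  move: Xi Xj; rewrite !inE => /andP[freeX XUi] /andP[_ XUj].
  have := capU j i sj si ne_ji; rewrite ltnNge -(eqnP freeX) mxrankS //.
  by rewrite sub_capmx XUj XUi.
rewrite -[n in (_ <= \prod_(i < k) (_ ^ n - _))%N](mxrank1 F n).
rewrite -card_frames ?mxrank1 ?(leq_trans le_kt) //.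
have -> : (size s * \prod_(i < k) (#|F| ^ t - #|F| ^ i) =
           \sum_(i <- s) #|frames k (U i)|)%N.
  rewrite (eq_big_seq (fun=> \prod_(i < k) (#|F| ^ t - #|F| ^ i))%N) => [|i si].
    by rewrite big_const_seq count_predT iter_addn_0 mulnC.
  by rewrite card_frames rkU.
under eq_bigr do rewrite -sum1_card big_mkcond /=.
rewrite exchange_big -[X in (_ <= X)%N]sum1_card [X in (_ <= X)%N]big_mkcond /=.
apply: leq_sum => X _.
by rewrite -big_mkcond sum1_count; case: (X \in _) (in_one_frames X).
Qed.

End Frames.

Section RankMetric.
Variables (F : finFieldType) (L : fieldExtType F) (n : nat).
Implicit Types (x y z : 'rV[L]_n) (s : seq 'rV[L]_n).

Lemma coord_mxB x y : coord_mx (x - y) = coord_mx x - coord_mx y.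
Proof. by apply/matrixP => i j; rewrite !mxE linearB. Qed.

Lemma rk_sub_capmx x y z :
  (\rank (coord_mx (x - z) :&: coord_mx (y - z))%MS + rk (x - y) <=
   rk (x - z) + rk (y - z))%N.
Proof.
have -> : x - y = (x - z) - (y - z) by rewrite opprB addrA subrK.
rewrite /rk -[leqRHS]mxrank_sum_cap addnC leq_add2r coord_mxB mxrankS //.
by rewrite addmx_sub_adds ?eqmx_opp ?submx_refl.
Qed.

Lemma rk_triangle x y z : (rk (x - y) <= rk (x - z) + rk (y - z))%N.
Proof. exact: leq_trans (leq_addl _ _) (rk_sub_capmx x y z). Qed.

Lemma size_ball_le1 s r a d : uniq s -> {in s, forall c, (rk (c - r) <= a)%N} ->
    {in s &, forall c1 c2, c1 != c2 -> (d <= rk (c1 - c2))%N} -> (2 * a < d)%N ->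
  (size s <= 1)%N.
Proof.
case: s => [|c1 [|c2 s]] //= /andP[+ _]; rewrite !inE negb_or => /andP[ne_c12 _].
move=> rk_r dist lt_2a_d.
have s1 : c1 \in [:: c1, c2 & s] by rewrite mem_head.
have s2 : c2 \in [:: c1, c2 & s] by rewrite !inE eqxx orbT.
have := rk_triangle c1 c2 r; have := dist c1 c2 s1 s2 ne_c12.
have := rk_r c1 s1; have := rk_r c2 s2.
(* The rank terms occur in convertible but syntactically different forms,
   which lia would treat as distinct atoms; set identifies them. *)
by set e1 := rk (c1 - r); set e2 := rk (c2 - r); set e12 := rk (c1 - c2); lia.
Qed.

Lemma size_sphere_le s r t d : uniq s -> {in s, forall c, rk (c - r) = t} ->
    {in s &, forall c1 c2, c1 != c2 -> (d <= rk (c1 - c2))%N} ->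
    (t < d <= 2 * t)%N -> (t <= n)%N ->
  (size s * \prod_(i < 2 * t + 1 - d) (#|F| ^ t - #|F| ^ i) <=
   \prod_(i < 2 * t + 1 - d) (#|F| ^ n - #|F| ^ i))%N.
Proof.
move=> uniq_s rk_r dist /andP[lt_td le_d2t] le_tn.
apply: (frame_packing (U := fun c => coord_mx (c - r))) => //; last by lia.
move=> c1 c2 s1 s2 ne_c12; have := rk_sub_capmx c1 c2 r.
rewrite !rk_r //; have := dist c1 c2 s1 s2 ne_c12.
by set e12 := rk (c1 - c2); set cap := \rank (_ :&: _)%MS; lia.
Qed.

End RankMetric.

Lemma sum_count_eq (T : Type) (s : seq T) (f : T -> nat) m N :
  (\sum_(m <= t < N) count (fun x => f x == t) s = count (fun x => m <= f x < N) s)%N.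
Proof.
elim: s => [|x s IHs] /=; first by rewrite big1.
rewrite big_split /= IHs; congr (_ + _)%N.
rewrite -(big_mkcond (fun t => f x == t) (fun=> 1%N)) sum1_count.
rewrite (@eq_count _ _ (pred1 (f x))) => [|t]; last exact: eq_sym.
by rewrite count_uniq_mem ?iota_uniq // mem_index_iota.
Qed.

Lemma size_count_split (T : eqType) (s : seq T) (f : T -> nat) a b :
    {in s, forall x, (f x <= b)%N} ->
  size s = (count (fun x => f x <= a) s +
            \sum_(a.+1 <= t < b.+1) count (fun x => f x == t) s)%N.
Proof.
move=> le_fb; rewrite sum_count_eq -(count_predC (fun x => f x <= a)%N); congr (_ + _)%N.
by apply: eq_in_count => x /le_fb /= le_fxb; rewrite ltnS le_fxb andbT ltnNge.
Qed.

Lemma card_code_ball_le (F : finFieldType) (L : fieldExtType F) (d tau n : nat)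
    (C : {fset 'rV[L]_n}) (r : 'rV[L]_n) :
    (tau < d)%N -> (d <= n)%N -> min_rank_dist C d ->
  (#|` code_ball C tau r |)%:R <= 1 + \sum_((d.-1)./2.+1 <= t < tau.+1)
      gbin #|F| n (2 * t + 1 - d) / gbin #|F| t (2 * t + 1 - d) :> rat.
Proof.
move=> lt_tau_d le_dn [dist _]; set a := (d.-1)./2.
have a_d : (a + a <= d.-1 <= a + a + 1)%N.
  by rewrite /a; have := odd_double_half d.-1; rewrite -addnn; case: odd => /=; lia.
have q_ge2 : (2 <= #|F|)%N by exact: card_finNzRing_gt1.
set s := enum_fset (code_ball C tau r).
have in_ball c : c \in s -> (c \in C) && (rk (c - r) <= tau)%N by rewrite /code_ball !inE.
have dist_s : {in s &, forall c1 c2, c1 != c2 -> (d <= rk (c1 - c2))%N}.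
  by move=> c1 c2 /in_ball/andP[c1C _] /in_ball/andP[c2C _]; exact: dist.
rewrite (@size_count_split _ s (fun c => rk (c - r)) a tau); last first.
  by move=> c /in_ball/andP[].
rewrite natrD natr_sum; apply: lerD.
  rewrite lern1 -size_filter; apply: (size_ball_le1 (r := r) (a := a) (d := d)).
  - exact/filter_uniq/fset_uniq.
  - by move=> c; rewrite mem_filter => /andP[].
  - by move=> c1 c2; rewrite !mem_filter => /andP[_ c1s] /andP[_ c2s]; exact: dist_s.
  - lia.
apply: ler_sum_nat => t /andP[lt_at lt_t_tau].
have le_kt : (2 * t + 1 - d <= t)%N by lia.
rewrite gbin_ratioE // -!natr_prod_frames ?(leq_trans le_kt) //; try lia.
rewrite ler_pdivlMr ?ltr0n ?prodn_gt0 // => [|i]; last first.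
  by rewrite subn_gt0 ltn_exp2l //; apply: leq_trans (ltn_ord i) le_kt.
rewrite -natrM ler_nat -size_filter; apply: (size_sphere_le (r := r)); try lia.
- exact/filter_uniq/fset_uniq.
- by move=> c; rewrite mem_filter => /andP[/eqP].
- by move=> c1 c2; rewrite !mem_filter => /andP[_ c1s] /andP[_ c2s]; exact: dist_s.
Qed.

Lemma sum_exp_le q d n a tau : (0 < q)%N ->
  (\sum_(a.+1 <= t < tau.+1) q ^ ((2 * t + 1 - d) * (n - t)) <=
   (tau - a) * q ^ ((2 * tau + 1 - d) * (n - a - 1)))%N.
Proof.
move=> q_gt0; rewrite -subSS -sum_nat_const_nat big_nat_cond [leqRHS]big_nat_cond.
apply: leq_sum => t /andP[/andP[lt_at lt_t_tau] _].
by rewrite leq_pexp2l // leq_mul //; lia.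
Qed.

Theorem theorem2 (q : nat) (F : finFieldType) (L : fieldExtType F)
    (d tau n m : nat) (C : {fset 'rV[L]_n}) :
  #|F| = q -> \dim {:L}%VS = m ->
  ((d.-1)./2 <= tau)%N -> (tau < d)%N -> (d <= n)%N -> (n <= m)%N ->
  min_rank_dist C d ->
  let a := (d.-1)./2 in
  let A : rat := 1 + \sum_(a.+1 <= t < tau.+1)
                       gbin q n (2 * t + 1 - d) / gbin q t (2 * t + 1 - d) in
  let B : rat := 1 + 4 * \sum_(a.+1 <= t < tau.+1)
                       ((q ^ ((2 * t + 1 - d) * (n - t)))%N)%:R in
  let D : rat := 1 + 4 * (tau - a)%:R *
                       ((q ^ ((2 * tau + 1 - d) * (n - a - 1)))%N)%:R in
  [/\ forall r : 'rV[L]_n, (#|` code_ball C tau r |)%:R <= A,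
      A <= B & B <= D].
Proof.
move=> <- _ _ lt_tau_d le_dn _ distC a A B D.
have q_ge2 : (2 <= #|F|)%N by exact: card_finNzRing_gt1.
split=> [r | | ]; first exact: card_code_ball_le.
  rewrite lerD2l mulr_sumr; apply: ler_sum_nat => t /andP[_ le_t_tau].
  by apply: gbin_ratio_le => //; lia.
rewrite lerD2l -mulrA ler_pM2l // -natr_sum -natrM ler_nat.
by apply: sum_exp_le; lia.
Qed.
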